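(* Let $1<p\le2$ and let $X$ be a real normed space of type $p$ with type $p$ constant $T_p(X)$. Let $A\subseteq X$ be approximately convex, $D=\operatorname{diam}(A)$, and $d=\mathcal{H}(A,\operatorname{Co}(A))$. If $d\ge2$, then $$D\ge\frac{8^{1/p}}{16\,T_p(X)}\,(2^d)^{(p-1)/p}$$ (with the right-hand side interpreted as $+\infty$ if $d=+\infty$).
   Context: $X$ has type $p$ if there is a constant $T_p(X)$ such that $\bigl(\mathbb{E}\|\sum_{i=1}^n\varepsilon_ix_i\|^p\bigr)^{1/p}\le T_p(X)\bigl(\sum_{i=1}^n\|x_i\|^p\bigr)^{1/p}$ for all $n$ and $x_1,\dots,x_n\in X$, where $(\varepsilon_i)$ are independent random signs with $P(\varepsilon_i=1)=P(\varepsilon_i=-1)=1/2$. A set $A$ is approximately convex if $d(tx+(1-t)y,A)\le1$ for all $x,y\in A$, $t\in[0,1]$, where $d(x,A)=\inf_{a\in A}\|x-a\|$. $\mathcal{H}$ is the Hausdorff distance, $\operatorname{Co}$ the convex hull, $\operatorname{diam}(A)=\sup\{\|x-y\|:x,y\in A\}$. *)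

From HB Require Import structures.
From mathcomp Require Import all_boot all_order all_algebra.
From mathcomp Require Import all_classical all_reals all_analysis.
Set Implicit Arguments. Unset Strict Implicit. Unset Printing Implicit Defensive.
Import Order.TTheory GRing.Theory Num.Theory.
Import numFieldNormedType.Exports.
Local Open Scope classical_set_scope.
Local Open Scope ring_scope.

Section Defs.
Variables (R : realType) (X : normedModType R).

(* Rademacher average: (E || sum_i eps_i x_i ||^p)^(1/p), the expectation being
   the uniform average over all 2^n sign vectors. *)
Definition rademacher_avg (p : R) (n : nat) (x : 'I_n -> X) : R :=
  ((2 ^+ n)^-1 * \sum_(eps : {ffun 'I_n -> bool})
      `| \sum_(i < n) ((if eps i then 1 else -1) : R) *: x i | `^ p) `^ (p^-1).

Definition type_constant (p T : R) : Prop :=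
  forall (n : nat) (x : 'I_n -> X),
    rademacher_avg p x <= T * (\sum_(i < n) `| x i | `^ p) `^ (p^-1).

Definition edist (x : X) (A : set X) : \bar R :=
  ereal_inf [set (`| x - a |)%:E | a in A].

Definition approx_convex (A : set X) : Prop :=
  forall x y t, A x -> A y -> 0 <= t <= 1 ->
    (edist (t *: x + (1 - t) *: y)%R A <= 1%:E)%E.

Definition conv_hull (A : set X) : set X :=
  [set c | exists (n : nat) (x : 'I_n -> X) (l : 'I_n -> R),
     [/\ (forall i, A (x i)), (forall i, 0 <= l i), \sum_(i < n) l i = 1
       & c = \sum_(i < n) l i *: x i]].

Definition hausdorff (A B : set X) : \bar R :=
  maxe (ereal_sup [set edist a B | a in A]) (ereal_sup [set edist b A | b in B]).

Definition diam (A : set X) : \bar R :=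
  ereal_sup [set (`| z.1 - z.2 |)%:E | z in A `*` A].

End Defs.

(* A point c = sum_i l_i x_i of Co(A) is approximated by empirical means: averaging
   over N independent draws from l and symmetrizing with random signs, the type-p
   inequality yields a sample whose mean lies within T D N^(1/p - 1) of c (Maurey's
   lemma).  For N = 2^k, approximate convexity applied along the binary tree of
   midpoints puts that mean within k of A.  Hence d <= k + T D 2^(-k(p-1)/p) for
   every k, and k = floor(d) - 1 gives the bound. *)

From Pilot Require Import Defs.
From HB Require Import structures.
From mathcomp Require Import all_boot all_order all_algebra.
From mathcomp Require Import all_classical all_reals all_analysis.
From mathcomp Require Import ring lra.
Set Implicit Arguments. Unset Strict Implicit. Unset Printing Implicit Defensive.
Import Order.TTheory GRing.Theory Num.Theory.
Import numFieldNormedType.Exports.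
Local Open Scope classical_set_scope.
Local Open Scope ring_scope.

Section power_mean.
Variable R : realType.
Implicit Types (p s t u b : R).

Lemma powR_wmean2_le p s t u b : 1 <= p -> 0 <= s -> 0 <= t -> 0 <= u -> 0 <= b ->
  (s * u + t * b) `^ p <= (s + t) `^ (p - 1) * (s * u `^ p + t * b `^ p).
Proof.
move=> p1 s0 t0 u0 b0; have p0 : 0 < p by apply: lt_le_trans p1.
have [st0|st_neq0] := eqVneq (s + t) 0.
  have /andP[/eqP-> /eqP->] : (s == 0) && (t == 0) by rewrite -paddr_eq0 ?st0.
  by rewrite !mul0r addr0 powR0 ?gt_eqF.
have st_gt0 : 0 < s + t by rewrite lt_neqAle eq_sym st_neq0 addr_ge0.
set th := s / (s + t).
have th0 : 0 <= th by rewrite divr_ge0 ?(ltW st_gt0).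
have th1 : th <= 1 by rewrite ler_pdivrMr // mul1r lerDl.
have -> : s * u + t * b = (s + t) * (th * u + (1 - th) * b) by rewrite /th; field.
have -> : (s + t) `^ (p - 1) * (s * u `^ p + t * b `^ p) =
    (s + t) `^ p * (th * u `^ p + (1 - th) * b `^ p).
  by rewrite -(mulr_powRB1 (ltW st_gt0) p0) /th; field.
rewrite powRM ?(ltW st_gt0) ?ler_wpM2l ?powR_ge0 //; last first.
  by rewrite addr_ge0 // mulr_ge0 // subr_ge0.
have := @convex_powR R p p1 (Itv01 th0 th1) u b.
by rewrite !inE /= !in_itv /= !andbT => /(_ u0 b0); rewrite !convRE.
Qed.

Lemma powR_wsum_le (I : eqType) (r : seq I) (w a : I -> R) p : 1 <= p ->
  (forall i, 0 <= w i) -> (forall i, 0 <= a i) ->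
  (\sum_(i <- r) w i * a i) `^ p <=
    (\sum_(i <- r) w i) `^ (p - 1) * \sum_(i <- r) w i * a i `^ p.
Proof.
move=> p1 w0 a0; have p0 : 0 < p by apply: lt_le_trans p1.
elim: r => [|i r IH]; first by rewrite !big_nil mulr0 powR0 ?gt_eqF.
rewrite !big_cons.
set S := \sum_(j <- r) w j; set A := \sum_(j <- r) w j * a j.
set B := \sum_(j <- r) w j * a j `^ p.
have S0 : 0 <= S by rewrite sumr_ge0.
have A0 : 0 <= A by rewrite sumr_ge0 // => j _; rewrite mulr_ge0.
have [u u0 [-> Bu]] : exists2 u, 0 <= u & A = S * u /\ S * u `^ p <= B.
  have [S_eq0|S_neq0] := eqVneq S 0.
    have w_eq0 : {in r, forall j, w j = 0}.
      by move=> j jr; apply/eqP; move: S_eq0 => /eqP; rewrite psumr_eq0 // => /allP/(_ j jr).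
    exists 0 => //; rewrite S_eq0 !mul0r; split.
      by rewrite /A big1_seq // => j /w_eq0 ->; rewrite mul0r.
    by rewrite sumr_ge0 // => j _; rewrite mulr_ge0 ?powR_ge0.
  have S_gt0 : 0 < S by rewrite lt_neqAle eq_sym S_neq0.
  exists (A / S); first by rewrite divr_ge0.
  split; first by rewrite mulrC divfK.
  rewrite -(ler_pM2l (powR_gt0 (p - 1) S_gt0)) mulrA (mulrC _ S) mulr_powRB1 //.
  by rewrite -powRM ?divr_ge0 // [S * _]mulrC divfK.
apply: (le_trans (powR_wmean2_le p1 (w0 i) S0 (a0 i) u0)).
by rewrite ler_wpM2l ?powR_ge0 // lerD2l.
Qed.

Lemma powR_wmean_le (I : finType) (w a : I -> R) p : 1 <= p ->
  (forall i, 0 <= w i) -> (forall i, 0 <= a i) -> \sum_i w i = 1 ->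
  (\sum_i w i * a i) `^ p <= \sum_i w i * a i `^ p.
Proof.
by move=> p1 w0 a0 w1; have := powR_wsum_le (index_enum I) p1 w0 a0; rewrite w1 powR1 mul1r.
Qed.

End power_mean.

Section approx_convex.
Variables (R : realType) (X : normedModType R).
Implicit Types (A : set X) (x y : X) (r : R).

Lemma edist_le_norm x A a : A a -> (Defs.edist x A <= (`|x - a|)%:E)%E.
Proof. by move=> Aa; apply: ereal_inf_lbound; exists a. Qed.

Lemma edist_le_near x A r e : (Defs.edist x A <= r%:E)%E -> 0 < e ->
  exists2 a, A a & `|x - a| < r + e.
Proof.
move=> xA e0; have /ereal_inf_lt[_ [a Aa <-]] : (Defs.edist x A < (r + e)%:E)%E.
  by apply: le_lt_trans xA _; rewrite lte_fin ltrDl.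
by rewrite lte_fin; exists a.
Qed.

Lemma edist_le_normD x y A r : (Defs.edist y A <= r%:E)%E ->
  (Defs.edist x A <= (r + `|x - y|)%:E)%E.
Proof.
move=> yA; apply/lee_addgt0Pr => e e0.
have [a Aa ya] := edist_le_near yA e0.
apply: (le_trans (edist_le_norm _ Aa)); rewrite -EFinD lee_fin.
have := ler_normD (x - y) (y - a); rewrite subrKA; have := ltW ya; lra.
Qed.

Lemma approx_convex_edist_midpoint A u v r : approx_convex A ->
  (Defs.edist u A <= r%:E)%E -> (Defs.edist v A <= r%:E)%E ->
  (Defs.edist (2^-1 *: (u + v)) A <= (r + 1)%:E)%E.
Proof.
move=> hA uA vA; apply/lee_addgt0Pr => e e0.
have [a Aa ua] := edist_le_near uA e0.
have [b Ab vb] := edist_le_near vA e0.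
have half01 : 0 <= (2 : R)^-1 <= 1 by rewrite invr_ge0 ler0n /= invf_le1 // ler1n.
have := edist_le_normD (2^-1 *: (u + v)) (hA a b _ Aa Ab half01).
move/le_trans; apply; rewrite -EFinD lee_fin.
have -> : (1 - 2^-1 : R) = 2^-1 by field.
rewrite -scalerDr -scalerBr opprD addrACA normrZ ger0_norm ?invr_ge0 ?ler0n //.
have : `|u - a + (v - b)| <= (r + e) + (r + e).
  by apply: (le_trans (ler_normD _ _)); apply: lerD; apply: ltW.
lra.
Qed.

Lemma approx_convex_edist_dyadic_mean A k (f : nat -> X) : approx_convex A ->
  (forall i, A (f i)) ->
  (Defs.edist ((2 ^+ k)^-1 *: \sum_(0 <= i < 2 ^ k) f i) A <= k%:R%:E)%E.
Proof.
move=> hA; elim: k f => [|k IH] f Af.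
  rewrite expn0 expr0 invr1 scale1r big_nat1.
  by apply: (le_trans (edist_le_norm _ (Af 0%N))); rewrite subrr normr0.
have -> : (2 ^ k.+1 = 2 ^ k + 2 ^ k)%N by rewrite expnS mul2n addnn.
rewrite (@big_cat_nat _ _ _ (2 ^ k)%N) ?leq_addr //= -{2}(add0n (2 ^ k)%N) big_addn addnK.
rewrite exprS invfM -scalerA scalerDr -[k.+1%:R]natr1.
apply: (approx_convex_edist_midpoint hA (IH _ Af)).
exact: (IH (fun i => f (i + 2 ^ k)%N)).
Qed.

End approx_convex.

Lemma exists_le_wmean (R : realType) (I : finType) (w F : I -> R) :
  (forall i, 0 <= w i) -> \sum_i w i = 1 -> exists i, F i <= \sum_i w i * F i.
Proof.
move=> w0 w1; have [i0 _|I0] := pickP (fun _ : I => true); last first.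
  by move: w1; rewrite big_pred0 // => /eqP; rewrite eq_sym oner_eq0.
have [i _ Fi] := @arg_minP _ _ _ i0 xpredT F isT.
exists i; rewrite -[F i]mul1r -w1 mulr_suml.
by apply: ler_sum => j _; rewrite ler_wpM2l ?Fi.
Qed.

Lemma type_constant_powR (R : realType) (X : normedModType R) (p T : R) :
  0 < p -> 0 <= T -> type_constant X p T -> forall N (v : 'I_N -> X),
  (2 ^+ N)^-1 * \sum_(e : {ffun 'I_N -> bool})
      `|\sum_j ((if e j then 1 else -1) : R) *: v j| `^ p
    <= T `^ p * \sum_j `|v j| `^ p.
Proof.
move=> p0 T0 hT N v; set a := _ * _.
have a0 : 0 <= a by rewrite mulr_ge0 ?invr_ge0 ?exprn_ge0 ?sumr_ge0 // => e _; rewrite powR_ge0.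
have S0 : 0 <= \sum_j `|v j| `^ p by rewrite sumr_ge0 // => j _; rewrite powR_ge0.
have -> : a = rademacher_avg p v `^ p by rewrite -powRrM mulVf ?gt_eqF // powRr1.
have -> : \sum_j `|v j| `^ p = ((\sum_j `|v j| `^ p) `^ p^-1) `^ p.
  by rewrite -powRrM mulVf ?gt_eqF // powRr1.
rewrite -powRM ?powR_ge0 //.
by apply: (ge0_ler_powR (ltW p0) _ _ (hT N v)); rewrite nnegrE ?mulr_ge0 ?powR_ge0.
Qed.

Definition ffun_mix (I J : finType) (e : {ffun I -> bool}) (f g : {ffun I -> J}) :
  {ffun I -> J} := [ffun i => if e i then f i else g i].

Definition swap_at (I J : finType) (e : {ffun I -> bool})
    (fg : {ffun I -> J} * {ffun I -> J}) : {ffun I -> J} * {ffun I -> J} :=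
  (ffun_mix e fg.1 fg.2, ffun_mix e fg.2 fg.1).

Lemma swap_atK (I J : finType) (e : {ffun I -> bool}) : involutive (@swap_at I J e).
Proof.
by move=> [f g]; congr (_, _); apply/ffunP => i; rewrite !ffunE; case: (e i).
Qed.

Section maurey.
Variables (R : realType) (X : normedModType R) (n N : nat) (l : 'I_n -> R).
Hypotheses (l_ge0 : forall i, 0 <= l i) (l_sum1 : \sum_i l i = 1).

Local Notation sample := {ffun 'I_N -> 'I_n}.

(* The law of N independent draws from the distribution l. *)
Definition sample_weight (Y : sample) : R := \prod_j l (Y j).

Lemma sample_weight_ge0 Y : 0 <= sample_weight Y.
Proof. by rewrite prodr_ge0. Qed.

Lemma sum_sample_weight : \sum_Y sample_weight Y = 1.
Proof.
rewrite /sample_weight -(bigA_distr_bigA (fun (j : 'I_N) i => l i)).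
by rewrite big1 // => j _; rewrite l_sum1.
Qed.

Lemma sum_sample_weight_eq j0 i : \sum_(Y : sample | Y j0 == i) sample_weight Y = l i.
Proof.
pose F j i' := if j == j0 then (i' == i)%:R * l i' else l i'.
have -> : \sum_(Y : sample | Y j0 == i) sample_weight Y = \sum_(Y : sample) \prod_j F j (Y j).
  rewrite big_mkcond; apply: eq_bigr => Y _.
  rewrite [RHS](bigD1 j0) // (eq_bigr (fun j => l (Y j))) => [|j /negbTE j_neq]; last first.
    by rewrite /F j_neq.
  rewrite /sample_weight (bigD1 j0) //= /F eqxx.
  by case: eqP; rewrite ?mul1r ?mul0r.
rewrite -bigA_distr_bigA (bigD1 j0) //=.
have -> : \prod_(j | j != j0) \sum_i' F j i' = 1.
  by apply: big1 => j /negbTE j_neq; rewrite /F j_neq l_sum1.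
rewrite mulr1 /F eqxx (bigD1 i) //= eqxx mul1r big1 ?addr0 // => i' /negbTE ->.
by rewrite mul0r.
Qed.

Lemma sum_sample_weightZ (V : lmodType R) j0 (x : 'I_n -> V) :
  \sum_Y sample_weight Y *: x (Y j0) = \sum_i l i *: x i.
Proof.
rewrite (partition_big (fun Y : sample => Y j0) xpredT) //=.
apply: eq_bigr => i _; rewrite -(sum_sample_weight_eq j0) scaler_suml.
by apply: eq_big => // Y /eqP ->.
Qed.

Lemma sum_sample_pair_weight :
  \sum_(P : sample * sample) sample_weight P.1 * sample_weight P.2 = 1.
Proof.
rewrite -(pair_bigA _ (fun Y Y' : sample => sample_weight Y * sample_weight Y')) /=.
under eq_bigr => Y _ do rewrite -mulr_sumr sum_sample_weight mulr1.
exact: sum_sample_weight.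
Qed.

Lemma sample_weight_swap_at (e : {ffun 'I_N -> bool}) (P : sample * sample) :
  sample_weight (swap_at e P).1 * sample_weight (swap_at e P).2 =
  sample_weight P.1 * sample_weight P.2.
Proof.
rewrite /sample_weight -!big_split /=; apply: eq_bigr => j _.
by rewrite !ffunE; case: (e j); rewrite // mulrC.
Qed.

(* Exchanging Y j and Y' j wherever e j is false preserves the weight of (Y, Y')
   and flips the sign of the j-th difference. *)
Lemma sample_pair_symmetrize (Phi : X -> R) (x : 'I_n -> X) (e : {ffun 'I_N -> bool}) :
  \sum_(P : sample * sample) sample_weight P.1 * sample_weight P.2 *
     Phi (\sum_j (x (P.1 j) - x (P.2 j))) =
  \sum_(P : sample * sample) sample_weight P.1 * sample_weight P.2 *
     Phi (\sum_j ((if e j then 1 else -1) : R) *: (x (P.1 j) - x (P.2 j))).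
Proof.
rewrite (reindex_inj (inv_inj (swap_atK e))); apply: eq_bigr => P _.
rewrite sample_weight_swap_at; congr (_ * Phi _); apply: eq_bigr => j _ /=.
by rewrite !ffunE; case: (e j); rewrite ?scale1r // scaleN1r opprB.
Qed.

Variables (x : 'I_n -> X) (p T D : R).
Hypotheses (p_ge1 : 1 <= p) (T_ge0 : 0 <= T) (hT : type_constant X p T).
Hypothesis x_dist : forall i i', `|x i - x i'| <= D.

Let c := \sum_i l i *: x i.

Lemma sample_dev_powR_le (Y : sample) : `|\sum_j (x (Y j) - c)| `^ p <=
  \sum_(Y' : sample) sample_weight Y' * `|\sum_j (x (Y j) - x (Y' j))| `^ p.
Proof.
have p0 : 0 <= p by apply: le_trans p_ge1.
have -> : \sum_j (x (Y j) - c) =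
    \sum_(Y' : sample) sample_weight Y' *: \sum_j (x (Y j) - x (Y' j)).
  under [RHS]eq_bigr => Y' _ do rewrite sumrB scalerBr.
  rewrite sumrB [RHS]sumrB -scaler_suml sum_sample_weight scale1r; congr (_ - _).
  under [RHS]eq_bigr => Y' _ do rewrite scaler_sumr.
  by rewrite [RHS]exchange_big; apply: eq_bigr => j _; rewrite sum_sample_weightZ.
set v := fun Y' : sample => \sum_j (x (Y j) - x (Y' j)).
apply: (le_trans _ (powR_wmean_le (a := fun Y' => `|v Y'|) p_ge1 sample_weight_ge0 _
  sum_sample_weight)) => //.
apply: ge0_ler_powR; rewrite ?nnegrE //.
  by rewrite sumr_ge0 // => Y' _; rewrite mulr_ge0 ?sample_weight_ge0.
apply: le_trans (ler_norm_sum _ _ _) _.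
by apply: ler_sum => Y' _; rewrite normrZ ger0_norm ?sample_weight_ge0.
Qed.

Lemma sample_pair_dev_le :
  \sum_(P : sample * sample) sample_weight P.1 * sample_weight P.2 *
     `|\sum_j (x (P.1 j) - x (P.2 j))| `^ p <= T `^ p * (N%:R * D `^ p).
Proof.
have p0 : 0 < p by apply: lt_le_trans p_ge1.
set Q := \sum_(P : sample * sample) _.
have -> : Q = (2 ^+ N)^-1 * \sum_(e : {ffun 'I_N -> bool}) Q.
  rewrite sumr_const card_ffun card_bool card_ord -[Q *+ _]mulr_natl mulrA natrX.
  by rewrite mulVf ?mul1r // expf_neq0.
under eq_bigr => e _ do rewrite /Q (sample_pair_symmetrize (fun v => `|v| `^ p) x e).
rewrite exchange_big mulr_sumr /=.
apply: le_trans (_ : \sum_(P : sample * sample)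
    sample_weight P.1 * sample_weight P.2 * (T `^ p * (N%:R * D `^ p)) <= _).
  apply: ler_sum => P _; rewrite -mulr_sumr mulrCA ler_wpM2l ?mulr_ge0 ?sample_weight_ge0 //.
  apply: le_trans (type_constant_powR p0 T_ge0 hT _) _.
  rewrite ler_wpM2l ?powR_ge0 //.
  apply: le_trans (_ : \sum_(j < N) D `^ p <= _); last by rewrite sumr_const card_ord mulr_natl.
  apply: ler_sum => j _; apply: ge0_ler_powR; rewrite ?nnegrE ?(ltW p0) ?x_dist //.
  exact: le_trans (x_dist (P.1 j) (P.2 j)).
by rewrite -mulr_suml sum_sample_pair_weight mul1r.
Qed.

Lemma maurey_sample : exists Y : sample,
  `|\sum_j (x (Y j) - c)| `^ p <= T `^ p * (N%:R * D `^ p).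
Proof.
have [Y hY] := exists_le_wmean (fun Y : sample => `|\sum_j (x (Y j) - c)| `^ p)
  sample_weight_ge0 sum_sample_weight.
exists Y; apply: le_trans hY _; apply: le_trans sample_pair_dev_le.
rewrite -(pair_bigA _ (fun Y Y' : sample =>
  sample_weight Y * sample_weight Y' * `|\sum_j (x (Y j) - x (Y' j))| `^ p)).
apply: ler_sum => Y' _.
under [X in _ <= X]eq_bigr => Y'' _ do rewrite -mulrA.
by rewrite -mulr_sumr ler_wpM2l ?sample_weight_ge0 ?sample_dev_powR_le.
Qed.

Lemma maurey_mean : (0 < N)%N -> exists Y : sample,
  `|N%:R^-1 *: \sum_j x (Y j) - c| <= T * D * N%:R `^ (p^-1 - 1).
Proof.
move=> N_gt0; have p0 : 0 < p by apply: lt_le_trans p_ge1.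
have N0 : 0 < N%:R :> R by rewrite ltr0n.
have D0 : 0 <= D.
  have [i0 _|n0] := pickP (fun _ : 'I_n => true).
    by apply: le_trans (x_dist i0 i0); rewrite normr_ge0.
  by move: l_sum1; rewrite big_pred0 // => /eqP; rewrite eq_sym oner_eq0.
have [Y hY] := maurey_sample; exists Y.
have -> : N%:R^-1 *: \sum_j x (Y j) - c = N%:R^-1 *: \sum_j (x (Y j) - c).
  rewrite sumrB sumr_const card_ord scalerBr -[c *+ N]scaler_nat scalerA.
  by rewrite mulVf ?scale1r ?gt_eqF.
rewrite normrZ ger0_norm ?invr_ge0 ?(ltW N0) // powRD; last by rewrite (gt_eqF N0) implybT.
rewrite powRN powRr1 ?(ltW N0) // mulrA [X in X <= _]mulrC ler_pM2r ?invr_gt0 //.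
have -> : T * D * N%:R `^ p^-1 = (T `^ p * (N%:R * D `^ p)) `^ p^-1.
  rewrite !powRM ?mulr_ge0 ?powR_ge0 ?(ltW N0) // -!powRrM !mulfV ?gt_eqF // !powRr1 //.
  by rewrite -mulrA [D * _]mulrC.
have := @ge0_ler_powR _ p^-1 _ _ _ _ _ hY.
rewrite /= -powRrM mulfV ?gt_eqF // powRr1 //.
apply; rewrite ?invr_ge0 ?(ltW p0) // nnegrE ?powR_ge0 //.
by rewrite !mulr_ge0 ?powR_ge0 ?ler0n.
Qed.

End maurey.

Section hausdorff.
Variables (R : realType) (X : normedModType R).
Implicit Types A : set X.

Lemma conv_hull_subset A : A `<=` conv_hull A.
Proof.
move=> a Aa; exists 1%N, (fun _ => a), (fun _ => 1).
by split => //; rewrite ?big_ord1 ?scale1r.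
Qed.

Lemma conv_hull0 : conv_hull (set0 : set X) = set0.
Proof.
apply/seteqP; split => // c [[|n] [x [l [Ax _ l1 _]]]]; last exact: Ax ord0.
by move: l1; rewrite big_ord0 => /eqP; rewrite eq_sym oner_eq0.
Qed.

Lemma hausdorff_hull0 : hausdorff (set0 : set X) (conv_hull set0) = -oo%E.
Proof. by rewrite conv_hull0 /hausdorff !image_set0 ereal_sup0 maxxx. Qed.

Lemma hausdorff_hull_le A r : 0 <= r ->
  (forall c, conv_hull A c -> (Defs.edist c A <= r%:E)%E) ->
  (hausdorff A (conv_hull A) <= r%:E)%E.
Proof.
move=> r0 hullA; rewrite /hausdorff ge_max; apply/andP; split.
  apply: ge_ereal_sup => _ [a Aa <-].
  apply: le_trans (edist_le_norm _ (conv_hull_subset Aa)) _.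
  by rewrite subrr normr0 lee_fin.
by apply: ge_ereal_sup => _ [c hc <-]; exact: hullA.
Qed.

Lemma diam_ge_norm A a b : A a -> A b -> ((`|a - b|)%:E <= diam A)%E.
Proof. by move=> Aa Ab; apply: ereal_sup_ubound; exists (a, b). Qed.

End hausdorff.

Lemma type_constantW (R : realType) (X : normedModType R) (p T T' : R) :
  T <= T' -> type_constant X p T -> type_constant X p T'.
Proof.
move=> TT' hT n x; apply: le_trans (hT n x) _.
by rewrite ler_wpM2r ?powR_ge0.
Qed.

Lemma conv_hull_edist_le (R : realType) (X : normedModType R) (A : set X)
    (p T D : R) (k : nat) c :
  approx_convex A -> 1 <= p -> 0 <= T -> type_constant X p T ->
  (forall a b, A a -> A b -> `|a - b| <= D) -> conv_hull A c ->
  (Defs.edist c A <= (k%:R + T * D * 2 `^ (- (k%:R * ((p - 1) / p))))%:E)%E.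
Proof.
move=> hA p1 T0 hT AD [n [x [l [Ax l0 l1 ->]]]].
have N_gt0 : (0 < 2 ^ k)%N by rewrite expn_gt0.
have [Y hY] := maurey_mean l0 l1 p1 T0 hT (fun i i' => AD _ _ (Ax i) (Ax i')) N_gt0.
have mean_A := approx_convex_edist_dyadic_mean k hA
  (fun i => Ax (Y (insubd (Ordinal N_gt0) i))).
have sumY : \sum_(0 <= i < 2 ^ k) x (Y (insubd (Ordinal N_gt0) i)) = \sum_j x (Y j).
  by rewrite big_mkord; apply: eq_bigr => j _; rewrite valKd.
rewrite sumY -natrX in mean_A.
apply: le_trans (edist_le_normD _ mean_A) _; rewrite lee_fin lerD2l distrC.
apply: le_trans hY _; rewrite natrX -powR_mulrn // -powRrM.
suff -> : k%:R * (p^-1 - 1) = - (k%:R * ((p - 1) / p)) :> R by [].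
by field; rewrite gt_eqF // (lt_le_trans _ p1).
Qed.

Lemma dyadic_tradeoff_le (R : realType) (q M d : R) : 0 <= q -> 2 <= d ->
  (forall k : nat, d <= k%:R + M * 2 `^ (- (k%:R * q))) -> 2 `^ ((d - 2) * q) <= M.
Proof.
move=> q0 d2 hk.
have /andP[md dm] := truncn_itv (le_trans (ler0n _ 2) d2).
set m := Num.truncn d in md dm.
have m2 : (2 <= m)%N by rewrite truncn_ge_nat //; lra.
have km : (m.-1)%:R = m%:R - 1 :> R.
  by rewrite -[in RHS](@prednK m) ?(leq_trans _ m2) // -natr1 addrK.
have := hk m.-1; rewrite km powRN => hdk.
apply: (@le_trans _ _ (2 `^ ((m%:R - 1) * q))).
  by rewrite ler_powR ?ler1n // ler_wpM2r //; move: dm; rewrite -natr1; lra.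
have : 1 <= M / 2 `^ ((m%:R - 1) * q) by lra.
by rewrite ler_pdivlMr ?powR_gt0 // mul1r.
Qed.

Lemma powR8_div16_le (R : realType) (p d : R) : 1 <= p ->
  8 `^ p^-1 / 16 * (2 `^ d) `^ ((p - 1) / p) <= 2 `^ ((d - 2) * ((p - 1) / p)).
Proof.
move=> p1; have p0 : 0 < p by apply: lt_le_trans p1.
have two_natr n : (2 : R) `^ n%:R = (2 ^ n)%:R by rewrite powR_mulrn // natrX.
rewrite -[8](two_natr 3) -[16](two_natr 4) -!powRrM -powRN -!powRD ?pnatr_eq0 ?implybT //.
rewrite ler_powR ?ler1n //.
have : p^-1 <= 2 by apply: le_trans (_ : 1 <= 2); rewrite ?invf_le1 ?ler1n.
suff -> : (d - 2) * ((p - 1) / p) = d * ((p - 1) / p) + 2 * p^-1 - 2 by lra.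
by field; rewrite gt_eqF.
Qed.

Lemma dyadic_tradeoff_lower_bound (R : realType) (p T D d : R) :
  1 <= p -> 0 < T -> 2 <= d ->
  (forall k : nat, d <= k%:R + T * D * 2 `^ (- (k%:R * ((p - 1) / p)))) ->
  8 `^ p^-1 / (16 * T) * (2 `^ d) `^ ((p - 1) / p) <= D.
Proof.
move=> p1 T_gt0 d2 hk; have p0 : 0 < p by apply: lt_le_trans p1.
have -> : 8 `^ p^-1 / (16 * T) * (2 `^ d) `^ ((p - 1) / p) =
    8 `^ p^-1 / 16 * (2 `^ d) `^ ((p - 1) / p) / T by field; rewrite gt_eqF.
rewrite ler_pdivrMr // [D * T]mulrC; apply: le_trans (powR8_div16_le d p1) _.
by apply: (dyadic_tradeoff_le _ d2 hk); rewrite divr_ge0 ?subr_ge0 // ltW.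
Qed.

Theorem theorem6p1 (R : realType) (X : normedModType R) (p T : R)
  (A : set X) :
  1 < p -> p <= 2 -> type_constant X p T ->
  approx_convex A ->
  (2%:E <= hausdorff A (conv_hull A))%E ->
  (hausdorff A (conv_hull A) = +oo%E -> diam A = +oo%E) /\
  (hausdorff A (conv_hull A) \is a fin_num ->
     ((8 `^ (p^-1) / (16 * T)) *
        (2 `^ fine (hausdorff A (conv_hull A))) `^ ((p - 1) / p))%:E
     <= diam A)%E.
Proof.
move=> p1 _ hT hA; set H := hausdorff A _ => H2.
have [A0|/set0P[a Aa]] := eqVneq A set0; first by move: H2; rewrite /H A0 hausdorff_hull0.
have := diam_ge_norm Aa Aa; rewrite subrr normr0.
case eD : (diam A) => [D| |] // D0; last by split; rewrite ?leey.
rewrite lee_fin in D0.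
have AD a' b : A a' -> A b -> `|a' - b| <= D by move=> *; rewrite -lee_fin -eD diam_ge_norm.
have H_le k : (H <= (k%:R + Num.max T 0 * D * 2 `^ (- (k%:R * ((p - 1) / p))))%:E)%E.
  apply: hausdorff_hull_le => [|c]; last apply: conv_hull_edist_le (ltW p1) _ _ AD => //.
  - by rewrite addr_ge0 ?mulr_ge0 ?powR_ge0 ?le_max ?lexx ?orbT.
  - by rewrite le_max lexx orbT.
  - by apply: type_constantW hT; rewrite le_max lexx.
split => [Hoo|H_fin]; first by have := H_le 0%N; rewrite Hoo leye_eq.
set d := fine H; have Hd : H = d%:E by rewrite fineK.
rewrite Hd lee_fin in H2; rewrite lee_fin.
have [T_le0|T_gt0] := leP T 0.
  apply: le_trans D0; rewrite mulr_le0_ge0 ?powR_ge0 // mulr_ge0_le0 ?powR_ge0 //.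
  by rewrite invr_le0 mulr_ge0_le0.
apply: (dyadic_tradeoff_lower_bound (ltW p1) T_gt0 H2) => k.
by have := H_le k; rewrite Hd lee_fin max_l // ltW.
Qed.
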